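(* Let $G=(S,r)$ be a ranked set with $|S|=n$. Let $S(G;u,v)=\sum_{A\subseteq S}u^{r(S)-r(A)}v^{|A|-r(A)}$ be its corank-nullity generating function, and let $T(G;x,y)=S(G;x-1,y-1)$ be its Tutte polynomial. Write $T(G;x,y)=\sum_{i,j\in\mathbb{Z}} b_{i,j}x^iy^j$. Then: (1) for every integer $k$ with $0\le k<n$, $$\sum_{i=0}^{k}\sum_{j=0}^{k-i}(-1)^j\binom{k-i}{j}b_{i,j}=0;$$ (2) for $k=n$, $$\sum_{i=0}^{n}\sum_{j=0}^{n-i}(-1)^j\binom{n-i}{j}b_{i,j}=(-1)^{n-r(S)}.$$
   Context: A ranked set is a pair $G=(S,r)$ where $S$ is a finite set and $r:2^S\to\mathbb{Z}$ is a function satisfying: $r(\emptyset)=0$; $r(A)\le r(S)$ for all $A\subseteq S$; and $r(A)\le |A|$ for all $A\subseteq S$. These conditions ensure $T(G;x,y)$ is a polynomial in $x,y$. *)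

From HB Require Import structures.
From mathcomp Require Import all_boot all_order all_algebra.
Set Implicit Arguments. Unset Strict Implicit. Unset Printing Implicit Defensive.
Import Order.TTheory GRing.Theory Num.Theory.
Local Open Scope ring_scope.

Definition ranked_set (S : finType) (r : {set S} -> int) : Prop :=
  [/\ r set0 = 0, (forall A, r A <= r setT) & (forall A, r A <= (#|A|)%:Z)].

(* Bivariate polynomials over int: the outer variable is x, the inner one y.
   A polynomial P : {poly {poly int}} represents sum_{i,j} (P`_i)`_j x^i y^j. *)
Definition bvX : {poly {poly int}} := 'X.
Definition bvY : {poly {poly int}} := ('X)%:P.

(* corank-nullity generating function S(G;u,v) evaluated at (u,v) with u,v
   bivariate polynomials; exponents are nonnegative for ranked sets, so we
   take them as natural numbers via absz. *)
Definition corank_nullity (S : finType) (r : {set S} -> int)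
  (u v : {poly {poly int}}) : {poly {poly int}} :=
  \sum_(A : {set S}) u ^+ `|r setT - r A|%N * v ^+ `|(#|A|)%:Z - r A|%N.

Definition tutte (S : finType) (r : {set S} -> int) : {poly {poly int}} :=
  corank_nullity r (bvX - 1) (bvY - 1).

Definition tutte_coef (S : finType) (r : {set S} -> int) (i j : nat) : int :=
  ((tutte r)`_i)`_j.

From HB Require Import structures.
From mathcomp Require Import all_boot all_order all_algebra.
From mathcomp Require Import zify ring.
Set Implicit Arguments.
Unset Strict Implicit.
Unset Printing Implicit Defensive.
Import Order.TTheory GRing.Theory Num.Theory.
Local Open Scope ring_scope.

(* Both sums are L_k(T) for the linear form
   L_k(F) = sum_(i <= k) sum_j (-1)^j C(k-i, j) F_(i,j).  By Pascal's rule L_k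
   vanishes on the ideal generated by xy - x - y = (x-1)(y-1) - 1, so modulo it
   we may use (x-1)(y-1) = 1.  Then each term (x-1)^(r(S)-r(A)) (y-1)^(|A|-r(A))
   becomes (x-1)^r(S) (y-1)^|A|, the sum over A collapses to (x-1)^r(S) y^n, and
   multiplying by ((x-1)(y-1))^(n-r(S)) and using (x-1)y = x turns this into
   (y-1)^(n-r(S)) x^n, on which L_k is 0 for k < n and (-1)^(n-r(S)) for k = n. *)

Section BinomialForm.
Variable R : comNzRingType.
Implicit Types (p q : {poly R}) (F G H : {poly {poly R}}).

Definition alt_binom_sum (m : nat) p : R :=
  \sum_(j < m.+1) (-1) ^+ j * 'C(m, j)%:R * p`_j.

Lemma alt_binom_sum_is_zmod_morphism m : zmod_morphism (alt_binom_sum m).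
Proof.
move=> p q; rewrite /alt_binom_sum -sumrB.
by apply: eq_bigr => j _; rewrite coefB mulrBr.
Qed.

HB.instance Definition _ m := GRing.isZmodMorphism.Build _ _ (alt_binom_sum m)
  (alt_binom_sum_is_zmod_morphism m).

Lemma alt_binom_sum0 p : alt_binom_sum 0 p = p`_0.
Proof. by rewrite /alt_binom_sum big_ord1 /= bin0 !mul1r. Qed.

Lemma alt_binom_sumSX m p :
  alt_binom_sum m.+1 ('X * p) = alt_binom_sum m ('X * p) - alt_binom_sum m p.
Proof.
rewrite /alt_binom_sum big_ord_recl [in X in _ = X - _]big_ord_recl /=.
rewrite big_ord_recr [X in _ = _ - X]big_ord_recr /= !coefXM /= binn !mulr0 !add0r.
under eq_bigr do rewrite /bump /= add1n coefXM /= binS natrD exprS mulrDr mulrDl.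
under [in X in _ = X - _]eq_bigr do rewrite /bump /= add1n coefXM /= exprS.
rewrite big_split /bump /= add0n binn.
under [X in _ + X + _]eq_bigr do rewrite -!mulrA mulN1r !mulrA.
rewrite sumrN exprS; ring.
Qed.

Definition binom_form (k : nat) F : R :=
  \sum_(i < k.+1) alt_binom_sum (k - i) F`_i.

Lemma binom_form_is_zmod_morphism k : zmod_morphism (binom_form k).
Proof.
move=> F G; rewrite /binom_form -sumrB.
by apply: eq_bigr => i _; rewrite coefB raddfB.
Qed.

HB.instance Definition _ k := GRing.isZmodMorphism.Build _ _ (binom_form k)
  (binom_form_is_zmod_morphism k).

Lemma binom_formCXn k q i :
  binom_form k (q%:P * 'X^i) = if (i <= k)%N then alt_binom_sum (k - i) q else 0.
Proof.
rewrite /binom_form (eq_bigr (fun a : 'I_k.+1 =>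
  if a == i :> nat then alt_binom_sum (k - a) q else 0)); last first.
  by move=> a _; rewrite coefCM coefXn; case: eqP; rewrite ?mulr1 ?mulr0 ?raddf0.
by rewrite -big_mkcond (big_ord1_eq _ (fun a => alt_binom_sum (k - a) q)) ltnS.
Qed.

Definition xy_rel : {poly {poly R}} := 'X * 'X%:P - 'X - 'X%:P.

Lemma binom_form_xy_relCXn k q i : binom_form k (xy_rel * (q%:P * 'X^i)) = 0.
Proof.
have -> : xy_rel * (q%:P * 'X^i) =
    ('X * q)%:P * 'X^(i.+1) - q%:P * 'X^(i.+1) - ('X * q)%:P * 'X^i.
  by rewrite /xy_rel rmorphM exprS /=; ring.
rewrite !raddfB /= !binom_formCXn.
case: (ltngtP i k) => [lt_ik | lt_ki | ->].
- by rewrite -(subnSK lt_ik) alt_binom_sumSX subrr.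
- by rewrite !subr0.
- by rewrite subnn alt_binom_sum0 coefXM !subr0.
Qed.

Lemma binom_form_xy_relM k H : binom_form k (xy_rel * H) = 0.
Proof.
rewrite -[H]coefK poly_def mulr_sumr raddf_sum big1 // => i _.
by rewrite -mul_polyC; apply: binom_form_xy_relCXn.
Qed.

Lemma binom_form_mod_xy_rel k F H : binom_form k (F + xy_rel * H) = binom_form k F.
Proof. by rewrite raddfD /= binom_form_xy_relM addr0. Qed.

Local Notation u := ('X - 1 : {poly {poly R}}).
Local Notation v := ('X%:P - 1 : {poly {poly R}}).

Lemma binom_form_uvXM k m F : binom_form k ((u * v) ^+ m * F) = binom_form k F.
Proof.
have -> : (u * v) ^+ m * F = F + xy_rel * ((\sum_(i < m) (u * v) ^+ i) * F).
  have -> : xy_rel = u * v - 1 by rewrite /xy_rel; ring.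
  by rewrite mulrA -subrX1; ring.
exact: binom_form_mod_xy_rel.
Qed.

Lemma binom_form_uv_shift k a b m :
  binom_form k (u ^+ (a + m) * v ^+ (b + m)) = binom_form k (u ^+ a * v ^+ b).
Proof. by rewrite -[RHS](binom_form_uvXM k m) !exprD exprMn; congr binom_form; ring. Qed.

Lemma binom_form_uYXn k n G :
  binom_form k (G * (u * 'X%:P) ^+ n) = binom_form k (G * 'X^n).
Proof.
have -> : G * (u * 'X%:P) ^+ n = G * 'X^n +
    xy_rel * (G * \sum_(i < n) (u * 'X%:P) ^+ (n.-1 - i) * 'X ^+ i).
  have -> : xy_rel = u * 'X%:P - 'X by rewrite /xy_rel; ring.
  by rewrite mulrCA -subrXX; ring.
exact: binom_form_mod_xy_rel.
Qed.

Lemma binom_form_uXY k a d :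
  binom_form k (u ^+ a * 'X%:P ^+ (a + d)) = binom_form k (v ^+ d * 'X^(a + d)).
Proof.
rewrite -binom_form_uYXn -(binom_form_uvXM k d); congr binom_form.
by rewrite !exprMn !exprD; ring.
Qed.

Lemma binom_form_rank_term k (rS rA : int) (a : nat) :
  0 <= rS -> rA <= rS -> rA <= a%:Z ->
  binom_form k (u ^+ `|rS - rA| * v ^+ `|a%:Z - rA|) =
  binom_form k (u ^+ `|rS| * v ^+ a).
Proof.
move=> rS_ge0 le_rA_rS le_rA_a; have [rA_ge0 | rA_lt0] := leP 0 rA.
- have e_rS : `|rS|%N = (`|rS - rA| + `|rA|)%N by lia.
  have e_a : a = (`|a%:Z - rA| + `|rA|)%N by lia.
  by rewrite [in RHS]e_rS [in RHS]e_a binom_form_uv_shift.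
- have -> : `|rS - rA|%N = (`|rS| + `|rA|)%N by lia.
  have -> : `|a%:Z - rA|%N = (a + `|rA|)%N by lia.
  by rewrite binom_form_uv_shift.
Qed.

End BinomialForm.

Lemma sum_expr_card_subsets (T : finType) (R : comPzSemiRingType) (w : R) :
  \sum_(A : {set T}) w ^+ #|A| = (w + 1) ^+ #|T|.
Proof.
rewrite -prodr_const (bigA_distr _ _ (fun _ => w) (fun _ => 1)).
by apply: eq_bigr => A _; rewrite -big_mkcond prodr_const.
Qed.

Lemma binom_form_tutte (E : finType) (r : {set E} -> int) k : ranked_set r ->
  binom_form k (tutte r) =
  binom_form k ((('X - 1) ^+ `|#|E|%:Z - r setT|)%:P * 'X^#|E|).
Proof.
case=> r0 r_le_rS r_le_card.
have rS_ge0 : 0 <= r setT by rewrite -r0.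
have rS_le_n : r setT <= #|E|%:Z by rewrite -cardsT.
rewrite /tutte /corank_nullity /bvX /bvY raddf_sum (eq_bigr (fun A : {set E} =>
  binom_form k (('X - 1) ^+ `|r setT| * ('X%:P - 1) ^+ #|A|))); last first.
  by move=> A _; apply: binom_form_rank_term.
rewrite -raddf_sum -mulr_sumr sum_expr_card_subsets subrK.
set n := #|E|; set d := `|n%:Z - r setT|%N.
have -> : n = (`|r setT| + d)%N by rewrite /d; lia.
by rewrite -[LHS]/(binom_form k _) binom_form_uXY rmorphXn rmorphB.
Qed.

Theorem theorem3p1 (E : finType) (r : {set E} -> int) :
  ranked_set r ->
  (forall k : nat, (k < #|E|)%N ->
     \sum_(i < k.+1) \sum_(j < (k - i).+1)
        (-1) ^+ j * ('C(k - i, j))%:Z * tutte_coef r i j = 0) /\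
  (\sum_(i < #|E|.+1) \sum_(j < (#|E| - i).+1)
        (-1) ^+ j * ('C(#|E| - i, j))%:Z * tutte_coef r i j
     = (-1) ^ ((#|E|)%:Z - r setT)).
Proof.
move=> ranked; have [_ _ r_le_card] := ranked.
have rS_le_n : r setT <= #|E|%:Z by rewrite -cardsT.
have tutte_form k : \sum_(i < k.+1) \sum_(j < (k - i).+1)
    (-1) ^+ j * ('C(k - i, j))%:Z * tutte_coef r i j = binom_form k (tutte r).
  by apply: eq_bigr => i _; apply: eq_bigr => j _; rewrite natz.
split => [k lt_kn|]; rewrite tutte_form binom_form_tutte // binom_formCXn.
  by rewrite leqNgt lt_kn.
rewrite leqnn subnn alt_binom_sum0 -horner_coef0 horner_exp hornerXsubC sub0r.
by rewrite -[in RHS](gez0_abs (_ : 0 <= #|E|%:Z - r setT)) // subr_ge0.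
Qed.
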